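(* Let $A$ be a $\Gamma$-ring (as defined below) and define $N\colon A\to A$ by \begin{align*} Nx &= (Q_0x)^3 +2a\, (Q_0x)^2Q_2x -a\, Q_0x(Q_1x)^2 + a^2\,Q_0x(Q_2x)^2 - 6\, Q_0x\, Q_1x \, Q_2 x \\ &\qquad +2\,(Q_1x)^3 -2a\, Q_1x(Q_2x)^2 +4\,(Q_2x)^3. \end{align*} Then $N(xy)=N(x)N(y)$ for all $x,y\in A$.
   Context: $R=\mathbb{Z}[a]$ is a polynomial ring. $\Gamma$ is the associative ring equipped with a ring homomorphism $\eta\colon R\to\Gamma$, generated over $R$ by $Q_0,Q_1,Q_2$ subject to: (i) the $Q_i$ commute with elements of $\mathbb{Z}\subset R$, and $Q_0\,a = a^2Q_0-2aQ_1+6Q_2$, $Q_1\,a=3Q_0+aQ_2$, $Q_2\,a=-aQ_0+3Q_1$; (ii) $Q_1Q_0=2Q_2Q_1-2Q_0Q_2$ and $Q_2Q_0=Q_0Q_1+aQ_0Q_2-2Q_1Q_2$. A $\Gamma$-ring is a commutative $R$-algebra $A$ with a left $\Gamma$-module structure extending its $R$-module structure, such that $Q_0\cdot 1=1$, $Q_1\cdot1=Q_2\cdot 1=0$, and the cartan formulas hold for all $x,y\in A$: $Q_0(xy) = Q_0x\,Q_0y + 2\,Q_1x\,Q_2y+2\,Q_2x\, Q_1y$, $Q_1(xy) = Q_0x\, Q_1y + Q_1x\, Q_0y + a\,Q_1x\, Q_2y +a\, Q_2x\, Q_1y +2\, Q_2x\, Q_2y$, $Q_2(xy) = Q_0x\,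 Q_2y+Q_2x\, Q_0y+Q_1x\, Q_1y + a\, Q_2x\, Q_2y$. (Equivalently, a commutative monoid object in $\Gamma$-modules with the tensor product given by these formulas and unit $R$.) *)

From HB Require Import structures.
From mathcomp Require Import all_boot all_order all_algebra.
Set Implicit Arguments. Unset Strict Implicit. Unset Printing Implicit Defensive.
Import GRing.Theory.
Local Open Scope ring_scope.

(* R = Z[a] is {poly int}, with a = 'X.  A commutative R-algebra is a
   comAlgType {poly int}.  [aA A] is the image of a in A, so that
   a *: x = aA * x. *)
Definition aA (A : comAlgType {poly int}) : A := ('X : {poly int})%:A.

(* A Gamma-ring structure on A given by the operators Q0 Q1 Q2 : A -> A:
   a left Gamma-module structure extending the R-module structure
   (Q_i additive, hence commuting with Z; relations (i) and (ii) as
   operator identities), unit conditions and Cartan formulas. *)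
Definition is_Gamma_ring (A : comAlgType {poly int}) (Q0 Q1 Q2 : A -> A) : Prop :=
  let a := aA A in
  (forall x y, Q0 (x + y) = Q0 x + Q0 y) /\
  (forall x y, Q1 (x + y) = Q1 x + Q1 y) /\
  (forall x y, Q2 (x + y) = Q2 x + Q2 y) /\
  (forall x, Q0 (a * x) = a ^+ 2 * Q0 x - 2%:R * a * Q1 x + 6%:R * Q2 x) /\
  (forall x, Q1 (a * x) = 3%:R * Q0 x + a * Q2 x) /\
  (forall x, Q2 (a * x) = - (a * Q0 x) + 3%:R * Q1 x) /\
  (forall x, Q1 (Q0 x) = 2%:R * Q2 (Q1 x) - 2%:R * Q0 (Q2 x)) /\
  (forall x, Q2 (Q0 x) = Q0 (Q1 x) + a * Q0 (Q2 x) - 2%:R * Q1 (Q2 x)) /\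
  Q0 1 = 1 /\ Q1 1 = 0 /\ Q2 1 = 0 /\
  (forall x y, Q0 (x * y) = Q0 x * Q0 y + 2%:R * Q1 x * Q2 y + 2%:R * Q2 x * Q1 y) /\
  (forall x y, Q1 (x * y) = Q0 x * Q1 y + Q1 x * Q0 y + a * Q1 x * Q2 y
                            + a * Q2 x * Q1 y + 2%:R * Q2 x * Q2 y) /\
  (forall x y, Q2 (x * y) = Q0 x * Q2 y + Q2 x * Q0 y + Q1 x * Q1 y
                            + a * Q2 x * Q2 y).

Definition Nmap (A : comAlgType {poly int}) (Q0 Q1 Q2 : A -> A) (x : A) : A :=
  let a := aA A in
  Q0 x ^+ 3 + 2%:R * a * Q0 x ^+ 2 * Q2 x - a * Q0 x * Q1 x ^+ 2
  + a ^+ 2 * Q0 x * Q2 x ^+ 2 - 6%:R * Q0 x * Q1 x * Q2 x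
  + 2%:R * Q1 x ^+ 3 - 2%:R * a * Q1 x * Q2 x ^+ 2 + 4%:R * Q2 x ^+ 3.

From mathcomp Require Import all_boot all_order all_algebra.
From mathcomp Require Import ring.

(* The Cartan formulas say exactly that x |-> Q0 x + Q1 x t + Q2 x t^2 is
   multiplicative from A to the cubic algebra A[t]/(t^3 - a t - 2).  The map N
   is the norm of that algebra, i.e. the determinant of the matrix of
   multiplication by an element, so it is multiplicative because determinants
   are. *)

Import GRing.Theory.
Local Open Scope ring_scope.

Lemma det_mx33 (R : comPzRingType) (M : 'M[R]_3) :
  \det M = M 0 0 * (M 1 1 * M 2 2 - M 1 2 * M 2 1)
         - M 0 1 * (M 1 0 * M 2 2 - M 1 2 * M 2 0)
         + M 0 2 * (M 1 0 * M 2 1 - M 1 1 * M 2 0).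
Proof.
(* Indexing by nat lets the lifted ordinals of the cofactors compute to
   0, 1, 2, so that [ring] sees equal entries as equal atoms. *)
pose m i j := M (inord i) (inord j).
have eM i j : M i j = m i j by rewrite /m !inord_val.
rewrite (expand_det_row _ 0) /cofactor !big_ord_recr big_ord0 /=.
rewrite !(expand_det_row _ 0) /cofactor !big_ord_recr !big_ord0 /=.
rewrite !det_mx11 !mxE !eM /=.
ring.
Qed.

Section CubicAlgebra.

Context {R : comPzRingType} (p q : R).

(* Elements of R[t]/(t^3 - p t - q) in coordinates on the basis 1, t, t^2. *)
Definition cubic_mul (x y : R * R * R) : R * R * R :=
  let: (x0, x1, x2) := x in
  let: (y0, y1, y2) := y in
  (x0 * y0 + q * (x1 * y2 + x2 * y1),
   x0 * y1 + x1 * y0 + p * (x1 * y2 + x2 * y1) + q * (x2 * y2),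
   x0 * y2 + x2 * y0 + x1 * y1 + p * (x2 * y2)).

(* Row i holds the coordinates of x t^i, so multiplication by x acts on
   coordinate rows as v |-> v *m cubic_mx x. *)
Definition cubic_mx (x : R * R * R) : 'M[R]_3 :=
  let: (x0, x1, x2) := x in
  \matrix_(i, j) (nth [::] [:: [:: x0; x1; x2];
                             [:: q * x2; x0 + p * x2; x1];
                             [:: q * x1; p * x1 + q * x2; x0 + p * x2]] i)`_j.

Definition cubic_norm (x : R * R * R) : R :=
  let: (x0, x1, x2) := x in
  x0 ^+ 3 + 2 * p * x0 ^+ 2 * x2 - p * x0 * x1 ^+ 2 + p ^+ 2 * x0 * x2 ^+ 2
  - 3 * q * x0 * x1 * x2 + q * x1 ^+ 3 - p * q * x1 * x2 ^+ 2 + q ^+ 2 * x2 ^+ 3.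

Lemma cubic_mxM x y : cubic_mx (cubic_mul x y) = cubic_mx x *m cubic_mx y.
Proof.
case: x => [[x0 x1] x2]; case: y => [[y0 y1] y2].
apply/matrixP => -[[|[|[|//]]] ?] -[[|[|[|//]]] ?];
  rewrite !mxE !big_ord_recr big_ord0 !mxE /=; ring.
Qed.

Lemma det_cubic_mx x : \det (cubic_mx x) = cubic_norm x.
Proof. by case: x => [[x0 x1] x2]; rewrite det_mx33 !mxE /=; ring. Qed.

Lemma cubic_normM x y :
  cubic_norm (cubic_mul x y) = cubic_norm x * cubic_norm y.
Proof. by rewrite -!det_cubic_mx cubic_mxM det_mulmx. Qed.

End CubicAlgebra.

Section GammaRing.

Context {A : comAlgType {poly int}} (Q0 Q1 Q2 : A -> A).

Definition Gamma_coord (x : A) : A * A * A := (Q0 x, Q1 x, Q2 x).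

Lemma Nmap_cubic_norm x : Nmap Q0 Q1 Q2 x = cubic_norm (aA A) 2 (Gamma_coord x).
Proof. by rewrite /Nmap /=; ring. Qed.

Lemma Gamma_coordM : is_Gamma_ring Q0 Q1 Q2 ->
  forall x y, Gamma_coord (x * y) = cubic_mul (aA A) 2 (Gamma_coord x) (Gamma_coord y).
Proof.
move=> [_ [_ [_ [_ [_ [_ [_ [_ [_ [_ [_ [cartan0 [cartan1 cartan2]]]]]]]]]]]]] x y.
by rewrite /Gamma_coord cartan0 cartan1 cartan2 /=; congr (_, _, _); ring.
Qed.

End GammaRing.

Theorem mainTheorem4 (A : comAlgType {poly int}) (Q0 Q1 Q2 : A -> A) :
  is_Gamma_ring Q0 Q1 Q2 ->
  forall x y : A, Nmap Q0 Q1 Q2 (x * y) = Nmap Q0 Q1 Q2 x * Nmap Q0 Q1 Q2 y.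
Proof.
move=> GammaA x y.
by rewrite !Nmap_cubic_norm Gamma_coordM // cubic_normM.
Qed.
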